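(* Let $F^a:\mathbb{R}^n\times\mathbb{R}^m\times[0,\infty)\to\mathbb{R}^n$ be an open-loop DT model and $U,V:\mathbb{R}^n\times[0,\infty)\to\mathbb{R}^m$ be control laws. Suppose that (i) $F^a$ is StLC, (ii) $U$ is StL, and (iii) the pair $(U,V)$ is StC. Then $\bar F^a_U$ is EPC with $\bar F^a_V$, where $\bar F^a_U(x,T):=F^a(x,U(x,T),T)$ and $\bar F^a_V(x,T):=F^a(x,V(x,T),T)$.
   Context: $\mathcal{K}_\infty$: continuous, strictly increasing, unbounded $\rho:\mathbb{R}_{\ge0}\to\mathbb{R}_{\ge0}$ with $\rho(0)=0$. StLC: an open-loop DT model $F^a$ is Semiglobally small-time Lipschitz Consistent if for each $M,E\ge0$ there exist $K=K(M,E)>0$, $T^*=T^*(M,E)>0$ such that $|F^a(x,u,T)-F^a(y,v,T)|\le(1+KT)|x-y|+KT|u-v|$ for all $|x|,|y|\le M$, $|u|,|v|\le E$, $T\in[0,T^* )$. StL: $U$ is Semiglobally small-time Lipschitz if for each $M\ge0$ there exist $K=K(M)>0$ and $T^*=T^*(M)>0$, with $T^*(\cdot)$ nonincreasing, such that for all $|x|,|y|\le M$ and $T\in[0,T^* )$: $U(0,T)=0$ and $|U(x,T)-U(y,T)|\le K|x-y|$. StC: the pair $(U,V)$ is Semiglobally small-time convergent Consistent if for each $M\ge0$ there exist $\rho\in\mathcal{K}_\infty$ and $T^*=T^*(M)>0$ such that $|U(x,T)-V(x,T)|\le\rho(T)|x|$ for all $|x|\le M$, $T\in[0,T^* )$.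 EPC: a closed-loop model $\bar F^a:\mathbb{R}^n\times(0,\infty)\to\mathbb{R}^n$ is Equilibrium-Preserving Consistent with $\bar F^b$ if for each $M\ge0$ there exist $K=K(M)>0$, $T^*=T^*(M)>0$ and $\rho\in\mathcal{K}_\infty$ such that $|\bar F^a(x,T)-\bar F^b(y,T)|\le(1+KT)|x-y|+T\rho(T)\max\{|x|,|y|\}$ for all $|x|,|y|\le M$, $T\in(0,T^* )$. *)

From mathcomp Require Import all_boot all_order all_algebra.
From mathcomp Require Import reals.
Set Implicit Arguments. Unset Strict Implicit. Unset Printing Implicit Defensive.
Import Order.TTheory GRing.Theory Num.Theory.
Local Open Scope ring_scope.

Definition enorm (R : realType) (n : nat) (v : 'rV[R]_n) : R :=
  Num.sqrt (\sum_(i < n) (v 0 i) ^+ 2).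

(* class K_infinity: rho : R>=0 -> R>=0 continuous, strictly increasing,
   unbounded, rho 0 = 0 (only values on [0,oo) matter) *)
Definition K_inf (R : realType) (rho : R -> R) : Prop :=
  rho 0 = 0 /\
  (forall s, 0 <= s -> 0 <= rho s) /\
  (forall s t, 0 <= s -> s < t -> rho s < rho t) /\
  (forall s, 0 <= s -> forall e, 0 < e -> exists2 d, 0 < d &
      forall t, 0 <= t -> `|t - s| < d -> `|rho t - rho s| < e) /\
  (forall B, exists2 s, 0 <= s & B <= rho s).

Definition StLC (R : realType) (n m : nat)
  (Fa : 'rV[R]_n -> 'rV[R]_m -> R -> 'rV[R]_n) : Prop :=
  forall M E : R, 0 <= M -> 0 <= E ->
  exists K Ts : R, 0 < K /\ 0 < Ts /\
   forall (x y : 'rV[R]_n) (u v : 'rV[R]_m) (T : R),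
    enorm x <= M -> enorm y <= M -> enorm u <= E -> enorm v <= E ->
    0 <= T -> T < Ts ->
    enorm (Fa x u T - Fa y v T) <= (1 + K * T) * enorm (x - y) + K * T * enorm (u - v).

Definition StL (R : realType) (n m : nat) (U : 'rV[R]_n -> R -> 'rV[R]_m) : Prop :=
  exists Ts : R -> R,
   (forall M1 M2, 0 <= M1 -> M1 <= M2 -> Ts M2 <= Ts M1) /\
   forall M : R, 0 <= M ->
   exists K : R, 0 < K /\ 0 < Ts M /\
    forall (x y : 'rV[R]_n) (T : R),
     enorm x <= M -> enorm y <= M -> 0 <= T -> T < Ts M ->
     U 0 T = 0 /\ enorm (U x T - U y T) <= K * enorm (x - y).

Definition StC (R : realType) (n m : nat) (U V : 'rV[R]_n -> R -> 'rV[R]_m) : Prop :=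
  forall M : R, 0 <= M ->
  exists rho : R -> R, exists Ts : R, K_inf rho /\ 0 < Ts /\
   forall (x : 'rV[R]_n) (T : R), enorm x <= M -> 0 <= T -> T < Ts ->
    enorm (U x T - V x T) <= rho T * enorm x.

Definition EPC (R : realType) (n : nat) (Fa Fb : 'rV[R]_n -> R -> 'rV[R]_n) : Prop :=
  forall M : R, 0 <= M ->
  exists K Ts : R, exists rho : R -> R, 0 < K /\ 0 < Ts /\ K_inf rho /\
   forall (x y : 'rV[R]_n) (T : R),
    enorm x <= M -> enorm y <= M -> 0 < T -> T < Ts ->
    enorm (Fa x T - Fb y T) <= (1 + K * T) * enorm (x - y)
                               + T * rho T * Num.max (enorm x) (enorm y).

Definition closed_loop (R : realType) (n m : nat)
  (Fa : 'rV[R]_n -> 'rV[R]_m -> R -> 'rV[R]_n) (U : 'rV[R]_n -> R -> 'rV[R]_m)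
  : 'rV[R]_n -> R -> 'rV[R]_n := fun x T => Fa x (U x T) T.

(* For [|x|, |y| <= M] the inputs [U(x,T)] and [V(y,T)] lie in the ball of radius
   [(K_U + rho(T_1)) M], where [K_U] is the Lipschitz constant of [U] and [T_1]
   bounds the sampling periods, so the StLC estimate of [F^a] applies with that
   ball.  Splitting [U(x,T) - V(y,T)] through [U(y,T)] bounds the input mismatch
   by [K_U |x - y| + rho(T) max(|x|, |y|)]; multiplied by the factor [K T] from
   StLC this yields EPC with constant [K (1 + K_U)] and function [K rho]. *)
From mathcomp Require Import all_boot all_order all_algebra.
From mathcomp Require Import reals ring lra.
Set Implicit Arguments. Unset Strict Implicit. Unset Printing Implicit Defensive.
Import Order.TTheory GRing.Theory Num.Theory.
Local Open Scope ring_scope.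

Section EuclideanNorm.
Variables (R : realType) (n : nat).
Implicit Types a b c : 'rV[R]_n.

Lemma enorm_ge0 a : 0 <= enorm a.
Proof. exact: sqrtr_ge0. Qed.

Lemma enorm_sqr a : enorm a ^+ 2 = \sum_(i < n) a 0 i ^+ 2.
Proof. by rewrite sqr_sqrtr // sumr_ge0 // => i _; apply: sqr_ge0. Qed.

Lemma enorm0 : enorm (0 : 'rV[R]_n) = 0.
Proof. by rewrite /enorm big1 ?sqrtr0 // => i _; rewrite mxE expr0n. Qed.

Lemma enormN a : enorm (- a) = enorm a.
Proof. by rewrite /enorm; congr Num.sqrt; apply: eq_bigr => i _; rewrite mxE sqrrN. Qed.

Lemma enorm_eq0_coord a : enorm a = 0 -> forall i, a 0 i = 0.
Proof.
move=> a0 i; have : \sum_(j < n) a 0 j ^+ 2 = 0 by rewrite -enorm_sqr a0 expr0n.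
move/psumr_eq0P => sq0; apply/eqP; rewrite -sqrf_eq0; apply/eqP.
by apply: sq0 => // j _; apply: sqr_ge0.
Qed.

Lemma Cauchy_Schwarz a b : \sum_(i < n) a 0 i * b 0 i <= enorm a * enorm b.
Proof.
have [a0|a_neq0] := eqVneq (enorm a) 0.
  by rewrite a0 mul0r big1 // => i _; rewrite enorm_eq0_coord // mul0r.
have [b0|b_neq0] := eqVneq (enorm b) 0.
  by rewrite b0 mulr0 big1 // => i _; rewrite (enorm_eq0_coord b0) mulr0.
have ab_gt0 : 0 < enorm a * enorm b by rewrite mulr_gt0 // lt_def ?a_neq0 ?b_neq0 enorm_ge0.
(* summing [0 <= (a_i |b| - b_i |a|)^2] over [i] *)
have termwise (i : 'I_n) : 2 * (a 0 i * b 0 i) * (enorm a * enorm b)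
    <= a 0 i ^+ 2 * enorm b ^+ 2 + b 0 i ^+ 2 * enorm a ^+ 2.
  rewrite -subr_ge0.
  have -> : a 0 i ^+ 2 * enorm b ^+ 2 + b 0 i ^+ 2 * enorm a ^+ 2
            - 2 * (a 0 i * b 0 i) * (enorm a * enorm b)
          = (a 0 i * enorm b - b 0 i * enorm a) ^+ 2 by ring.
  exact: sqr_ge0.
have := ler_sum (index_enum 'I_n) (P := xpredT) (fun i _ => termwise i).
rewrite big_split /= -!big_distrl /= -big_distrr /= -!enorm_sqr => summed.
by rewrite -(ler_pM2r ab_gt0); nra.
Qed.

Lemma enormD a b : enorm (a + b) <= enorm a + enorm b.
Proof.
have expand : \sum_(i < n) (a + b) 0 i ^+ 2
    = enorm a ^+ 2 + 2 * \sum_(i < n) a 0 i * b 0 i + enorm b ^+ 2.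
  by rewrite !enorm_sqr big_distrr -!big_split /=; apply: eq_bigr => i _; rewrite mxE; ring.
rewrite /enorm expand -/(enorm a) -/(enorm b).
rewrite -[_ + _ in X in _ <= X]ger0_norm ?addr_ge0 ?enorm_ge0 //.
rewrite -sqrtr_sqr ler_sqrt ?sqr_ge0 //.
by have := Cauchy_Schwarz a b; have := enorm_ge0 a; have := enorm_ge0 b; nra.
Qed.

Lemma enormB_le a b c : enorm (a - c) <= enorm (a - b) + enorm (b - c).
Proof. by rewrite -[a - c](subrKA b); apply: enormD. Qed.

End EuclideanNorm.

Lemma K_infZl (R : realType) (c : R) (rho : R -> R) :
  0 < c -> K_inf rho -> K_inf (fun t => c * rho t).
Proof.
move=> c_gt0 [rho0 [rho_ge0 [rho_incr [rho_cont rho_unbd]]]].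
split; first by rewrite rho0 mulr0.
split; first by move=> s s0; exact: mulr_ge0 (ltW c_gt0) (rho_ge0 s s0).
split; first by move=> s t s0 st; rewrite ltr_pM2l // rho_incr.
split.
  move=> s s0 e e_gt0; have [d d_gt0 hd] := rho_cont s s0 (e / c) (divr_gt0 e_gt0 c_gt0).
  exists d => // t t0 td; rewrite -mulrBr normrM gtr0_norm //.
  by rewrite -ltr_pdivlMl // mulrC; apply: hd.
move=> B; have [s s0 hs] := rho_unbd (B / c); exists s => //.
by rewrite -ler_pdivrMl // mulrC.
Qed.

Section SampledControls.
Variables (R : realType) (n m : nat) (U V : 'rV[R]_n -> R -> 'rV[R]_m).
Variables (T M K r : R).
Hypotheses (M_ge0 : 0 <= M) (K_ge0 : 0 <= K) (r_ge0 : 0 <= r).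
Hypothesis U_Lipschitz : forall x y, enorm x <= M -> enorm y <= M ->
  U 0 T = 0 /\ enorm (U x T - U y T) <= K * enorm (x - y).
Hypothesis UV_close : forall x, enorm x <= M -> enorm (U x T - V x T) <= r * enorm x.

Lemma enormU_le x : enorm x <= M -> enorm (U x T) <= K * enorm x.
Proof.
move=> xM; have zero_in : enorm (0 : 'rV[R]_n) <= M by rewrite enorm0.
have [U00 UL] := U_Lipschitz xM zero_in.
by move: UL; rewrite U00 !subr0.
Qed.

Lemma enormV_le x : enorm x <= M -> enorm (V x T) <= (K + r) * enorm x.
Proof.
move=> xM; rewrite -enormN -sub0r mulrDl.
by apply: le_trans (enormB_le _ (U x T) _) _; rewrite sub0r enormN lerD ?enormU_le ?UV_close.
Qed.

Lemma enorm_inputs_le x : enorm x <= M ->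
  enorm (U x T) <= (K + r) * M /\ enorm (V x T) <= (K + r) * M.
Proof.
move=> xM; have ball : (K + r) * enorm x <= (K + r) * M by rewrite ler_wpM2l ?addr_ge0.
split; last exact: le_trans (enormV_le xM) ball.
apply: le_trans (enormU_le xM) (le_trans _ ball).
by rewrite ler_wpM2r ?enorm_ge0 // lerDl.
Qed.

Lemma enormUV_le x y : enorm x <= M -> enorm y <= M ->
  enorm (U x T - V y T) <= K * enorm (x - y) + r * Num.max (enorm x) (enorm y).
Proof.
move=> xM yM; apply: le_trans (enormB_le _ (U y T) _) _.
rewrite lerD //; first by have [_] := U_Lipschitz xM yM.
by apply: le_trans (UV_close yM) _; rewrite ler_wpM2l // le_max lexx orbT.
Qed.

End SampledControls.

Theorem theorem2 (R : realType) (n m : nat)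
  (Fa : 'rV[R]_n -> 'rV[R]_m -> R -> 'rV[R]_n)
  (U V : 'rV[R]_n -> R -> 'rV[R]_m) :
  StLC Fa -> StL U -> StC U V ->
  EPC (closed_loop Fa U) (closed_loop Fa V).
Proof.
move=> F_StLC [TsU [_ U_StL]] UV_StC M M_ge0.
have [KU [KU_gt0 [TsU_gt0 U_Lip]]] := U_StL M M_ge0.
have [rho [TsC [rho_Kinf [TsC_gt0 UV_close]]]] := UV_StC M M_ge0.
have [_ [rho_ge0 [rho_incr _]]] := rho_Kinf.
pose T1 := Num.min (TsU M) TsC; pose E := (KU + rho T1) * M.
have T1_gt0 : 0 < T1 by rewrite lt_min TsU_gt0 TsC_gt0.
have [KF [TsF [KF_gt0 [TsF_gt0 F_Lip]]]] :=
  F_StLC M E M_ge0 (mulr_ge0 (addr_ge0 (ltW KU_gt0) (rho_ge0 _ (ltW T1_gt0))) M_ge0).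
exists (KF * (1 + KU)), (Num.min T1 TsF), (fun t => KF * rho t).
split; first by rewrite mulr_gt0 // ltr_wpDr // ltW.
split; first by rewrite lt_min T1_gt0 TsF_gt0.
split; first exact: K_infZl.
move=> x y T xM yM T_gt0; rewrite lt_min => /andP[T_T1 T_TsF].
move: (T_T1); rewrite lt_min => /andP[T_TsU T_TsC].
have U_LipT x' y' x'M y'M := U_Lip x' y' T x'M y'M (ltW T_gt0) T_TsU.
have UV_closeT x' x'M := UV_close x' T x'M (ltW T_gt0) T_TsC.
have rhoT_ge0 := rho_ge0 T (ltW T_gt0).
have rhoT_le : rho T <= rho T1 by rewrite ltW ?rho_incr ?ltW.
have ball : (KU + rho T) * M <= E by rewrite ler_wpM2r // lerD2l.
have [Ux_le _] := enorm_inputs_le M_ge0 (ltW KU_gt0) rhoT_ge0 U_LipT UV_closeT xM.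
have [_ Vy_le] := enorm_inputs_le M_ge0 (ltW KU_gt0) rhoT_ge0 U_LipT UV_closeT yM.
have := F_Lip x y _ _ T xM yM (le_trans Ux_le ball) (le_trans Vy_le ball) (ltW T_gt0) T_TsF.
have KFT_ge0 : 0 <= KF * T by rewrite mulr_ge0 ?ltW.
move/(ler_wpM2l KFT_ge0): (enormUV_le rhoT_ge0 U_LipT UV_closeT xM yM) => mismatch.
rewrite /closed_loop => /le_trans; apply.
set d := enorm (x - y); set mx := Num.max (enorm x) (enorm y).
have -> : (1 + KF * (1 + KU) * T) * d + T * (KF * rho T) * mx
        = (1 + KF * T) * d + KF * T * (KU * d + rho T * mx) by ring.
by rewrite lerD2l.
Qed.
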